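(* Let $F$ be a finite field with $q=|F|$. Let $k,n\in\mathbb{N}$ satisfy $k\le n$. Fix any $a=(a_0,\ldots,a_{k-1})\in F^k$. Then the number of $(2n+1)$-tuples $x=(x_0,\ldots,x_{2n})\in F^{2n+1}$ satisfying $(x_0,\ldots,x_{k-1})=a$ and $\det(H_{n,n}(x))=0$ is $q^{2n-k}$.
   Context: $\mathbb{N}=\{0,1,2,\ldots\}$. For $x=(x_0,\ldots,x_{2n})$, $H_{n,n}(x)$ is the $(n+1)\times(n+1)$ matrix $(x_{i+j})_{0\le i,j\le n}$. *)

From mathcomp Require Import all_boot all_order all_algebra.
Set Implicit Arguments. Unset Strict Implicit. Unset Printing Implicit Defensive.
Import GRing.Theory.
Local Open Scope ring_scope.

Definition hankel (R : nzRingType) (n : nat) (x : {ffun 'I_(n.*2.+1) -> R})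
  : 'M[R]_(n.+1) :=
  \matrix_(i < n.+1, j < n.+1) x (inord (i + j)).

From mathcomp Require Import all_boot all_order all_algebra.
From mathcomp Require Import zify.
Set Implicit Arguments. Unset Strict Implicit. Unset Printing Implicit Defensive.
Import GRing.Theory.
Local Open Scope ring_scope.

(* For s in F[X], H_n(s) = (s_(i+j))_(0<=i,j<=n) is singular iff s satisfies
   a Pade condition: some nonzero c of degree <= n makes the coefficients of
   c * s in degrees n..2n vanish (padeP). If s = X^r w with w_0 != 0 and v is
   the inverse of w modulo X^(2n+1-r), the Pade condition of order n for s is
   equivalent to r < n together with the Pade condition of order n - r - 1
   for v shifted down by r + 2 (pade_reduce).

   Fix the first n coefficients h of s and count the tails t of length n+1
   with H_n(s) singular. If h = 0, H_n(s) is singular iff s_n = 0. Otherwise,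
   with r the first nonzero position of h, the first n - r coefficients of v
   depend only on h and the next n + 1 are an injective function of t, so
   the count is one of order n - r - 1; strong induction on n gives q^n.
   Summing over the free entries between positions k and n then gives
   q^(2n-k) for a prescribed prefix of any length k <= n (corollary4). *)

Lemma drop_polyPoly (R : nzRingType) d (s : seq R) :
  drop_poly d (Poly s) = Poly (drop d s).
Proof. by apply/polyP => i; rewrite coef_drop_poly !coef_Poly nth_drop addnC. Qed.

Section Truncation.
Variable R : comNzRingType.
Implicit Types p q w v : {poly R}.

Definition eqmodX j p q := forall i, (i < j)%N -> p`_i = q`_i.

Lemma eqmodX_sym j p q : eqmodX j p q -> eqmodX j q p.
Proof. by move=> h i hi; rewrite h. Qed.

Lemma eqmodX_trans j p q r : eqmodX j p q -> eqmodX j q r -> eqmodX j p r.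
Proof. by move=> h1 h2 i hi; rewrite h1 ?h2. Qed.

Lemma eqmodX_le j k p q : (k <= j)%N -> eqmodX j p q -> eqmodX k p q.
Proof. by move=> hk h i hi; apply: h; apply: leq_trans hk. Qed.

Lemma eqmodX_mul j p q p' q' :
  eqmodX j p p' -> eqmodX j q q' -> eqmodX j (p * q) (p' * q').
Proof.
move=> hp hq i hi; rewrite !coefM; apply: eq_bigr => a _.
have := ltn_ord a; rewrite ltnS => ha.
by rewrite hp ?hq //; apply: leq_ltn_trans hi; rewrite ?leq_subr.
Qed.

Lemma eqmodX_small j p q :
  (size p <= j)%N -> (size q <= j)%N -> eqmodX j p q -> p = q.
Proof.
move=> hp hq h; apply/polyP => i; case: (ltnP i j) => hi; first exact: h.
by rewrite !nth_default // (leq_trans _ hi).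
Qed.

Lemma eqmodX_inv j w v w' v' :
  eqmodX j (w * v) 1 -> eqmodX j (w' * v') 1 -> eqmodX j w w' -> eqmodX j v v'.
Proof.
move=> h1 h2 hw.
apply: (@eqmodX_trans _ _ (v * (w' * v'))).
  by rewrite -{1}(mulr1 v); apply: eqmodX_mul => //; apply: eqmodX_sym.
rewrite mulrA; apply: (@eqmodX_trans _ _ ((v * w) * v')).
  by apply: eqmodX_mul => //; apply: eqmodX_mul => //; apply: eqmodX_sym.
by rewrite (mulrC v) -{2}(mul1r v'); apply: eqmodX_mul.
Qed.

Lemma drop_polyMXn_eq r p :
  (forall i, (i < r)%N -> p`_i = 0) -> drop_poly r p * 'X^r = p.
Proof.
move=> hp; rewrite -[RHS](poly_take_drop r) [take_poly r p](_ : _ = 0) ?add0r //.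
by apply/polyP => i; rewrite coef_take_poly coef0; case: ifP => // /hp.
Qed.

Lemma coefM_Xdiv (s c : {poly R}) r j :
  (forall i, (i < r)%N -> s`_i = 0) ->
  (c * s)`_(r + j) = (c * drop_poly r s)`_j.
Proof.
move=> hs; rewrite -{1}(drop_polyMXn_eq hs) mulrA coefMXn.
by rewrite ltnNge leq_addr /= addKn.
Qed.

Lemma coefM_drop (e v : {poly R}) d m l :
  (size e <= m.+1)%N -> (e * v)`_(d + m + l) = (e * drop_poly d v)`_(m + l).
Proof.
move=> he; rewrite -{1}(poly_take_drop d v) mulrDr coefD mulrA coefMXn.
rewrite nth_default ?add0r; first by rewrite ltnNge -addnA leq_addr /= addKn.
apply: (leq_trans (size_polyMleq _ _)).
have := size_take_poly d v; lia.
Qed.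

End Truncation.

Section TruncatedInverse.
Variable F : fieldType.
Implicit Types w : {poly F}.

Definition pinv M w : {poly F} :=
  (w`_0)^-1 *: \sum_(i < M) (1 - (w`_0)^-1 *: w) ^+ i.

Lemma pinvP M w : w`_0 != 0 -> eqmodX M (w * pinv M w) 1.
Proof.
move=> w0; set z := 1 - (w`_0)^-1 *: w.
have hw : w = w`_0 *: (1 - z).
  by rewrite /z opprB addrCA subrr addr0 scalerA divff // scale1r.
have -> : w * pinv M w = 1 - z ^+ M.
  rewrite /pinv {1}hw -scalerAr -scalerAl scalerA mulVf // scale1r -/z.
  by apply: oppr_inj; rewrite -mulNr !opprB subrX1.
have hz : drop_poly 1 z * 'X^1 = z.
  by apply: drop_polyMXn_eq => -[|//] _; rewrite /z coefB coefZ coef1 mulVf ?subrr.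
move=> i hi; rewrite -hz exprMn -exprM mul1n coefB coefMXn hi.
by rewrite subr0.
Qed.

End TruncatedInverse.

Section HankelPade.
Variable F : fieldType.
Implicit Types s c e v : {poly F}.

Definition hankel_poly n s : 'M[F]_n.+1 := \matrix_(i, j) s`_(i + j).

Lemma hankel_poly_local n s s' :
  eqmodX n.*2.+1 s s' -> hankel_poly n s = hankel_poly n s'.
Proof.
move=> h; apply/matrixP => i j; rewrite !mxE h //.
have := ltn_ord i; have := ltn_ord j; lia.
Qed.

Definition pade n s := exists c, [/\ c != 0, (size c <= n.+1)%N &
  forall l, (l <= n)%N -> (c * s)`_(n + l) = 0].

Lemma coefM_rev n l c s : (size c <= n.+1)%N ->
  (c * s)`_(n + l) = \sum_(i < n.+1) c`_(n - i) * s`_(i + l).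
Proof.
move=> hc; rewrite coefM [RHS](reindex_inj rev_ord_inj) /=.
rewrite (big_ord_widen (n + l).+1
  (fun j => c`_(n - (n.+1 - j.+1)) * s`_(n.+1 - j.+1 + l))) ?ltnS ?leq_addr //.
rewrite [RHS]big_mkcond /=; apply: eq_bigr => i _; case: ifP => hi.
  by congr (c`_ _ * s`_ _); lia.
by rewrite nth_default ?mul0r //; apply: leq_trans hc _; rewrite leqNgt hi.
Qed.

Definition singular n s : bool := \det (hankel_poly n s) == 0.

(* The Hankel matrix is singular iff s satisfies the Pade condition: the
   reversed coefficients of c form a nonzero left kernel vector. *)
Lemma padeP n s : reflect (pade n s) (singular n s).
Proof.
apply: (iffP det0P) => [[v vnz vH] | [c [cnz csz cz]]].
  pose c : {poly F} := \poly_(j < n.+1) v 0 (inord (n - j)).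
  exists c; split; last 1 first.
  - move=> l hl; rewrite coefM_rev ?size_poly //.
    transitivity ((v *m hankel_poly n s) 0 (inord l)); last by rewrite vH mxE.
    rewrite !mxE; apply: eq_bigr => i _.
    rewrite coef_poly ifT; last by have := ltn_ord i; lia.
    rewrite mxE inordK ?ltnS //; congr (v 0 _ * _); apply/val_inj.
    by rewrite /= inordK; have := ltn_ord i; lia.
  - apply: contra vnz => /eqP c0; apply/eqP/rowP => i.
    have := congr1 (fun p : {poly F} => p`_(n - i)) c0.
    rewrite coef0 coef_poly ifT; last by have := ltn_ord i; lia.
    rewrite mxE => <-; congr (v 0 _); apply/val_inj.
    by rewrite /= inordK; have := ltn_ord i; lia.
  - exact: size_poly.
exists (\row_(i < n.+1) c`_(n - i)).
  apply: contra cnz => /eqP v0; apply/eqP/polyP => j; rewrite coef0.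
  case: (ltnP j n.+1) => hj; last by rewrite nth_default // (leq_trans csz).
  have := congr1 (fun M : 'rV_n.+1 => M 0 (inord (n - j))) v0.
  by rewrite !mxE inordK ?subKn //; lia.
apply/rowP => l; rewrite !mxE.
transitivity ((c * s)`_(n + l)); last by rewrite cz //; have := ltn_ord l; lia.
by rewrite coefM_rev //; apply: eq_bigr => i _; rewrite !mxE.
Qed.

Lemma pade_zero n s : (forall i, (i <= n)%N -> s`_i = 0) -> pade n s.
Proof.
move=> hs; exists 'X^n; split; first by rewrite monic_neq0 ?monicXn.
  by rewrite size_polyXn.
by move=> l hl; rewrite coefXnM ltnNge leq_addr /= addKn hs.
Qed.

Section Reduction.
Variables (n r : nat) (s v : {poly F}).
Hypothesis s_low : forall i, (i < r)%N -> s`_i = 0.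
Hypothesis v_inv : eqmodX (n.*2.+1 - r) (drop_poly r s * v) 1.

(* A witness c for s gives the witness e = c * w mod X^(n-r) for v; since
   c = e * v mod X^(2n+1-r), e is nonzero, which forces r < n. *)
Lemma pade_reduce_fwd :
  (r <= n)%N -> pade n s -> (r < n)%N /\ pade (n - r).-1 (drop_poly r.+2 v).
Proof.
move=> hr [c [cnz csz cz]].
have hv := v_inv; set w := drop_poly r s in hv *.
set M := (n.*2.+1 - r)%N in hv *.
have cw l : (l <= n)%N -> (c * w)`_(n - r + l) = 0.
  by move=> hl; rewrite -coefM_Xdiv // addnA subnKC // cz.
set e := take_poly (n - r) (c * w).
have cw_e : eqmodX M (c * w) e.
  move=> i hi; rewrite /e coef_take_poly; case: ifP => // hi2.
  have -> : i = (n - r + (i - (n - r)))%N by lia.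
  by rewrite cw //; rewrite /M in hi; lia.
have c_ev : eqmodX M c (e * v).
  apply: (@eqmodX_trans _ _ _ (c * (w * v))).
    by rewrite -{1}(mulr1 c); apply: eqmodX_mul => //; apply: eqmodX_sym.
  by rewrite mulrA; apply: eqmodX_mul.
have enz : e != 0.
  apply: contra cnz => /eqP e0; apply/eqP; apply: (@eqmodX_small _ M).
  - by apply: leq_trans csz _; rewrite /M; lia.
  - by rewrite size_poly0.
  by move: c_ev; rewrite e0 mul0r.
have rn : (r < n)%N.
  rewrite ltnNge; apply/negP => hnr; move: enz.
  by rewrite /e (_ : n - r = 0)%N ?take_poly0l ?eqxx //; lia.
split => //; exists e; split => //.
  by apply: leq_trans (size_take_poly _ _) _; lia.
move=> l hl; rewrite -(coefM_drop _ r.+2); last first.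
  by apply: leq_trans (size_take_poly _ _) _; lia.
rewrite -c_ev; last by rewrite /M; lia.
by rewrite nth_default //; apply: leq_trans csz _; lia.
Qed.

(* Conversely a witness e for v gives the witness c = e * v mod X^(n+1). *)
Lemma pade_reduce_bwd :
  (r < n)%N -> pade (n - r).-1 (drop_poly r.+2 v) -> pade n s.
Proof.
move=> hr [e [enz esz ez]].
have hv := v_inv; set w := drop_poly r s in hv *.
set M := (n.*2.+1 - r)%N in hv *.
set m := (n - r).-1 in esz ez.
have ev l : (l <= m)%N -> (e * v)`_(r.+2 + m + l) = 0.
  by move=> hl; rewrite coefM_drop // ez.
set c := take_poly n.+1 (e * v).
have c_ev : eqmodX M c (e * v).
  move=> i hi; rewrite /c coef_take_poly; case: ifP => // hi2.
  have -> : i = (r.+2 + m + (i - n.+1))%N by rewrite /m; lia.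
  by rewrite ev //; rewrite /m; rewrite /M in hi; lia.
have cnz : c != 0.
  apply: contra enz => /eqP c0; apply/eqP; apply: (@eqmodX_small _ M).
  - by apply: leq_trans esz _; rewrite /M /m; lia.
  - by rewrite size_poly0.
  apply: (@eqmodX_trans _ _ _ (e * (w * v))).
    by rewrite -{1}(mulr1 e); apply: eqmodX_mul => //; apply: eqmodX_sym.
  rewrite mulrA (mulrC e) -mulrA -(mul0r w) (mulrC w); apply: eqmodX_mul => //.
  by rewrite -c0; apply: eqmodX_sym.
exists c; split => //; first exact: size_take_poly.
move=> l hl; rewrite (_ : n + l = r + (n - r + l))%N; last by lia.
rewrite coefM_Xdiv //.
have cw_e : eqmodX M (c * w) e.
  apply: (@eqmodX_trans _ _ _ (e * v * w)); first by apply: eqmodX_mul.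
  by rewrite -mulrA (mulrC v) -{2}(mulr1 e); apply: eqmodX_mul.
rewrite cw_e; last by rewrite /M; lia.
by rewrite nth_default //; apply: leq_trans esz _; rewrite /m; lia.
Qed.

Lemma pade_reduce : (r <= n)%N ->
  pade n s <-> (r < n)%N /\ pade (n - r).-1 (drop_poly r.+2 v).
Proof.
move=> hr; split; first exact: pade_reduce_fwd.
by case=> rn; apply: pade_reduce_bwd.
Qed.

End Reduction.
End HankelPade.

Section SequenceSums.
Variable T : finType.
Implicit Types f g : seq T -> nat.

Definition tsum L f : nat := \sum_(t : L.-tuple T) f t.

Lemma tsum0 f : tsum 0 f = f [::].
Proof.
rewrite /tsum (big_pred1 [tuple]) // => t /=; apply/esym/eqP/val_inj.
by case: t => -[].
Qed.

Lemma tsum_cons L f : tsum L.+1 f = (\sum_(x : T) tsum L (fun t => f (x :: t)))%N.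
Proof.
rewrite /tsum pair_big /= (reindex (fun p : T * L.-tuple T => cons_tuple p.1 p.2)) //.
exists (fun t : L.+1.-tuple T => (thead t, behead_tuple t)) => [[x t] _ | t _].
  by congr pair; apply: val_inj.
by case/tupleP: t => x t; apply: val_inj.
Qed.

Lemma tsum_ext L f g : (forall t, size t = L -> f t = g t) -> tsum L f = tsum L g.
Proof. by move=> h; apply: eq_bigr => t _; rewrite h // size_tuple. Qed.

Lemma tsum_cat a b f :
  tsum (a + b) f = tsum a (fun t1 => tsum b (fun t2 => f (t1 ++ t2))).
Proof.
elim: a f => [|a IH] f; first by rewrite tsum0.
by rewrite addSn !tsum_cons; apply: eq_bigr => x _; apply: IH.
Qed.

Lemma tsum_const L c : tsum L (fun _ => c) = (#|T| ^ L * c)%N.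
Proof.
elim: L => [|L IH]; first by rewrite tsum0 mul1n.
rewrite tsum_cons (eq_bigr (fun _ => #|T| ^ L * c)%N) // sum_nat_const.
by rewrite expnS mulnA.
Qed.

Lemma tsum_inj L (phi : seq T -> seq T) f :
  (forall t, size t = L -> size (phi t) = L) ->
  (forall t t', size t = L -> size t' = L -> phi t = phi t' -> t = t') ->
  tsum L (fun t => f (phi t)) = tsum L f.
Proof.
move=> hs hi; pose psi (t : L.-tuple T) : L.-tuple T := insubd t (phi t).
have psiE (t : L.-tuple T) : val (psi t) = phi t by rewrite /psi val_insubd hs ?size_tuple ?eqxx.
have psi_inj : injective psi.
  by move=> t t' e; apply: val_inj; apply: hi; rewrite ?size_tuple // -!psiE e.
by rewrite /tsum [RHS](reindex_inj psi_inj); apply: eq_bigr => t _; rewrite psiE.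
Qed.

Lemma tsum_prefix k L (s0 : seq T) f : size s0 = k ->
  tsum (k + L) (fun t => ((take k t == s0) * f t)%N) = tsum L (fun t => f (s0 ++ t)).
Proof.
move=> hs; rewrite tsum_cat.
have /eqP hs' := hs; pose T0 : k.-tuple T := Tuple hs'.
rewrite /tsum (bigD1 T0) //= [X in (_ + X)%N]big1 => [|t1 ne].
  by rewrite addn0; apply: eq_bigr => t _; rewrite take_size_cat // eqxx mul1n.
apply: big1 => t2 _; rewrite take_size_cat ?size_tuple //.
by move: ne; rewrite -(inj_eq val_inj) /= => /negbTE ->.
Qed.

Lemma card_ffun_tsum (x0 : T) L (P : pred {ffun 'I_L -> T}) :
  #|[set x | P x]| = tsum L (fun t => P [ffun i : 'I_L => nth x0 t i]).
Proof.
rewrite cardsE -sum1_card big_mkcond /=.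
rewrite (reindex (fun t : L.-tuple T => [ffun i => tnth t i])) /=; last first.
  exists (fun x : {ffun 'I_L -> T} => [tuple x i | i < L]) => [t _ | x _].
    by apply: eq_from_tnth => i; rewrite tnth_mktuple ffunE.
  by apply/ffunP => i; rewrite ffunE tnth_mktuple.
apply: eq_bigr => t _; rewrite unfold_in.
have -> : [ffun i => tnth t i] = [ffun i : 'I_L => nth x0 t i].
  by apply/ffunP => i; rewrite !ffunE (tnth_nth x0).
by case: (P _).
Qed.

End SequenceSums.

Section Count.
Variable F : finFieldType.
Local Notation q := #|F|.

Definition count_prefix m := forall k (h : seq F), (k <= m)%N -> size h = k ->
  tsum (m.*2.+1 - k) (fun t => singular m (Poly (h ++ t))) = (q ^ (m.*2 - k))%N.

Definition count_last n := forall h : seq F, size h = n ->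
  tsum n.+1 (fun t => singular n (Poly (h ++ t))) = (q ^ n)%N.

(* Shorter prefixes: sum over the coefficients between positions k and n. *)
Lemma count_prefix_of_last m : count_last m -> count_prefix m.
Proof.
move=> hC k h hk hh; rewrite (_ : m.*2.+1 - k = (m - k) + m.+1)%N; last by lia.
rewrite tsum_cat (tsum_ext (g := fun _ => q ^ m)%N); last first.
  move=> t1 ht1; rewrite -(hC (h ++ t1)); last by rewrite size_cat hh ht1; lia.
  by apply: tsum_ext => t2 _; rewrite catA.
by rewrite tsum_const -expnD; congr (_ ^ _)%N; lia.
Qed.

(* Zero prefix: s = x_n X^n + ..., singular iff x_n = 0. If x_n != 0 the
   reduction with r = n would require n < n. *)
Lemma count_last_zero n (h : seq F) : size h = n ->
  (forall i, (i < n)%N -> h`_i = 0) ->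
  tsum n.+1 (fun t => singular n (Poly (h ++ t))) = (q ^ n)%N.
Proof.
move=> hh hz; rewrite tsum_cons.
have coefs x t i :
    (Poly (h ++ x :: t))`_i = if (i < n)%N then 0 else (x :: t)`_(i - n).
  by rewrite coef_Poly nth_cat hh; case: ifP => // /hz.
rewrite (eq_bigr (fun x : F => if x == 0%R then q ^ n else 0)%N).
  by rewrite -big_mkcond big_pred1_eq.
move=> x _; case: (x =P 0) => [x0 | /eqP xnz].
  rewrite -[RHS]muln1 -tsum_const; apply: tsum_ext => t _.
  suff /padeP -> : pade n (Poly (h ++ x :: t)) by [].
  apply: pade_zero => i hi; rewrite coefs; case: ifP => // hin.
  by rewrite (_ : i - n = 0)%N ?x0 //; lia.
rewrite -[RHS](muln0 (q ^ n)%N) -tsum_const; apply: tsum_ext => t _.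
apply/eqP; rewrite eqb0; apply/padeP.
have s_low i : (i < n)%N -> (Poly (h ++ x :: t))`_i = 0 by rewrite coefs => ->.
have w0 : (drop_poly n (Poly (h ++ x :: t)))`_0 != 0.
  by rewrite coef_drop_poly coefs ltnn subnn.
by move/(pade_reduce s_low (pinvP w0) (leqnn n)) => [/[!ltnn]].
Qed.

(* Counting with the first d coefficients of p ++ u discarded: what remains
   is either the known prefix drop d p followed by the free tail u, or (when
   d > size p) the last 2m+1 entries of u, the others being irrelevant. *)
Lemma count_shifted m d L (p : seq F) : count_prefix m ->
  (size p - d <= m)%N -> (size p + L = d + m.*2.+1)%N ->
  tsum L (fun u => singular m (Poly (drop d (p ++ u)))) = (q ^ L.-1)%N.
Proof.
move=> IH hpd hL; case: (leqP d (size p)) => hd.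
  rewrite (tsum_ext (g := fun u => singular m (Poly (drop d p ++ u)))); last first.
    move=> u _; rewrite drop_cat; case: ltnP => // hdp.
    have -> : (d - size p = 0)%N by lia.
    by rewrite drop0 drop_oversize.
  have -> : L = (m.*2.+1 - (size p - d))%N by lia.
  by rewrite IH ?size_drop //; congr (_ ^ _)%N; lia.
have -> : L = ((d - size p) + m.*2.+1)%N by lia.
rewrite tsum_cat (tsum_ext (g := fun _ => q ^ m.*2)%N).
  by rewrite tsum_const -expnD; congr (_ ^ _)%N; lia.
move=> u1 hu1; have := IH 0 [::] (leq0n m) erefl; rewrite !subn0 => <-.
apply: tsum_ext => u2 _; rewrite drop_cat ltnNge (ltnW hd) /=.
by rewrite drop_size_cat.
Qed.

(* For a tail t write s = Poly (h ++ t) = X^r w and let v be the inverse of w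
   mod X^(2n+1-r). The first n - r coefficients of v only depend on h, the
   next n + 1 are an injective function Psi of t, and by pade_reduce H_n(s)
   is singular iff H_(n-r-1) of v shifted down by r + 2 is. *)
Section NonzeroPrefix.
Variables (n r : nat) (h : seq F).
Hypotheses (h_size : size h = n) (r_lt_n : (r < n)%N).
Hypotheses (h_low : forall i, (i < r)%N -> h`_i = 0) (h_r : h`_r != 0).

Local Notation M := (n.*2.+1 - r)%N.
Local Notation j := (n - r)%N.
Local Notation m := (n - r).-1.

Let inv t := pinv M (drop_poly r (Poly (h ++ t))).
Let inv0 := pinv M (drop_poly r (Poly h)).
Let inv_low := mkseq (fun i => inv0`_i) j.
Let Psi t := mkseq (fun i => (inv t)`_(j + i)) n.+1.

Lemma series_prefix t i : (i < n)%N -> (Poly (h ++ t))`_i = h`_i.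
Proof. by move=> hi; rewrite coef_Poly nth_cat h_size hi. Qed.

Lemma series_low t i : (i < r)%N -> (Poly (h ++ t))`_i = 0.
Proof. by move=> hi; rewrite series_prefix ?h_low //; lia. Qed.

Lemma series_inv t : eqmodX M (drop_poly r (Poly (h ++ t)) * inv t) 1.
Proof. by apply: pinvP; rewrite coef_drop_poly add0n series_prefix. Qed.

(* Up to degree 2n - r, v is the concatenation of inv_low and Psi t: its low
   coefficients only see those of s / X^r, which come from h. *)
Lemma inv_split t : eqmodX M (Poly (inv_low ++ Psi t)) (inv t).
Proof.
have inv_h : eqmodX M (drop_poly r (Poly h) * inv0) 1.
  by apply: pinvP; rewrite coef_drop_poly coef_Poly.
have low : eqmodX j (inv t) inv0.
  apply: (eqmodX_inv (w := drop_poly r (Poly (h ++ t))) (w' := drop_poly r (Poly h))).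
  - by apply: eqmodX_le (series_inv t); lia.
  - by apply: eqmodX_le inv_h; lia.
  - by move=> i hi; rewrite !coef_drop_poly series_prefix ?coef_Poly //; lia.
move=> i hi; rewrite coef_Poly nth_cat size_mkseq.
case: ltnP => hij; first by rewrite nth_mkseq // low.
by rewrite nth_mkseq ?subnKC //; lia.
Qed.

Lemma singular_Psi t :
  singular n (Poly (h ++ t)) = singular m (Poly (drop r.+2 (inv_low ++ Psi t))).
Proof.
rewrite -drop_polyPoly /singular (@hankel_poly_local _ m _ (drop_poly r.+2 (inv t))).
  apply/padeP/padeP; rewrite (pade_reduce (@series_low t) (series_inv t)) ?(ltnW r_lt_n) //.
  by case.
by move=> i hi; rewrite !coef_drop_poly inv_split //; lia.
Qed.

(* t is recovered from Psi t: v determines w mod X^(2n+1-r). *)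
Lemma Psi_inj t t' : size t = n.+1 -> size t' = n.+1 -> Psi t = Psi t' -> t = t'.
Proof.
move=> ht ht' e.
have vv : eqmodX M (inv t) (inv t').
  by apply: eqmodX_trans (eqmodX_sym (inv_split t)) _; rewrite e; apply: inv_split.
have ww : eqmodX M (drop_poly r (Poly (h ++ t))) (drop_poly r (Poly (h ++ t'))).
  by apply: (eqmodX_inv (w := inv t) (w' := inv t')); rewrite // mulrC; apply: series_inv.
apply: (@eq_from_nth _ 0) => [|i hi]; first by rewrite ht ht'.
have := ww (n + i - r)%N; rewrite !coef_drop_poly !coef_Poly !nth_cat h_size.
rewrite subnK ?ltnNge ?leq_addr /= ?addKn; last by lia.
by apply; rewrite ht in hi; lia.
Qed.

(* Counting tails t amounts to counting Psi t, a bijective change of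
   variables, and the latter count is one of order n - r - 1. *)
Lemma count_last_nonzero : count_prefix m ->
  tsum n.+1 (fun t => singular n (Poly (h ++ t))) = (q ^ n)%N.
Proof.
move=> IH; rewrite (tsum_ext (g := fun t =>
  singular m (Poly (drop r.+2 (inv_low ++ Psi t))))); last by move=> t _; rewrite singular_Psi.
rewrite (@tsum_inj _ _ Psi (fun u => singular m (Poly (drop r.+2 (inv_low ++ u))))).
- by apply: count_shifted; rewrite ?size_mkseq //; lia.
- by move=> t _; rewrite size_mkseq.
- exact: Psi_inj.
Qed.

End NonzeroPrefix.

Lemma count_last_step n : (forall m, (m < n)%N -> count_prefix m) -> count_last n.
Proof.
move=> IH h hh.
case: (boolP [exists i : 'I_n, h`_i != 0]) => [/existsP nz | /existsPn zero].
  have exP : exists i, (i < n)%N && (h`_i != 0).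
    by case: nz => i hi; exists (val i); rewrite ltn_ord.
  case: (ex_minnP exP) => r /andP[rn hr] rmin.
  apply: (@count_last_nonzero n r) => //; last by apply: IH; lia.
  move=> i hi; apply/eqP; case: (boolP (h`_i == 0)) => // hne.
  by have := rmin i; rewrite hne andbT => /(_ (ltn_trans hi rn)); lia.
apply: count_last_zero => // i hi; apply/eqP.
by have := zero (Ordinal hi); rewrite negbK.
Qed.

Lemma count_prefix_all m : count_prefix m.
Proof. by elim/ltn_ind: m => m IH; apply/count_prefix_of_last/count_last_step. Qed.

End Count.

Lemma hankel_Poly (F : fieldType) n (t : seq F) :
  hankel [ffun i : 'I_(n.*2.+1) => t`_i] = hankel_poly n (Poly t).
Proof.
apply/matrixP => i j; rewrite !mxE ffunE coef_Poly inordK //.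
by have := ltn_ord i; have := ltn_ord j; lia.
Qed.

Lemma forall_nth_take (T : eqType) (x0 : T) k (a : 'I_k -> T) (t : seq T) :
  (k <= size t)%N ->
  [forall i : 'I_k, nth x0 t i == a i] = (take k t == [seq a i | i <- enum 'I_k]).
Proof.
move=> hk; apply/forallP/eqP => [ht | e i].
  apply: (@eq_from_nth _ x0) => [|i]; rewrite size_takel //.
    by rewrite size_map size_enum_ord.
  move=> hi; rewrite nth_take // (nth_map (Ordinal hi)) ?size_enum_ord //.
  by rewrite (nth_ord_enum _ (Ordinal hi)); exact/eqP/(ht (Ordinal hi)).
by rewrite -(nth_take x0 (ltn_ord i)) e (nth_map i) ?size_enum_ord // nth_ord_enum.
Qed.

Theorem corollary4 (F : finFieldType) (k n : nat) (hkn : (k <= n)%N)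
  (a : 'I_k -> F) :
  #|[set x : {ffun 'I_(n.*2.+1) -> F} |
      [forall i : 'I_k, x (inord i) == a i] && (\det (hankel x) == 0)]|
  = (#|F| ^ (n.*2 - k))%N.
Proof.
set a_seq := [seq a i | i <- enum 'I_k].
have a_size : size a_seq = k by rewrite size_map size_enum_ord.
rewrite (card_ffun_tsum (0 : F)) (tsum_ext (g := fun t =>
  ((take k t == a_seq) * singular n (Poly t))%N)); last first.
  move=> t ht; rewrite hankel_Poly -(forall_nth_take 0) ?ht; last by lia.
  have -> : [forall i : 'I_k, [ffun j : 'I_(n.*2.+1) => t`_j] (inord i) == a i]
            = [forall i : 'I_k, t`_i == a i].
    by apply: eq_forallb => i; rewrite ffunE inordK //; have := ltn_ord i; lia.
  by rewrite /singular; case: (_ == 0); rewrite ?andbT ?andbF ?muln1 ?muln0.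
rewrite (_ : n.*2.+1 = k + (n.*2.+1 - k))%N; last by lia.
by rewrite tsum_prefix //; apply: count_prefix_all.
Qed.
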